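(* Let $m\ge 2$. If the Lucas numbers are complete mod $m$, then every Gibonacci sequence $\{G_n(a,b)\}$ (with $\gcd(a,b)=1$) is complete mod $m$.
   Context: For integers $a,b$ with $\gcd(a,b)=1$, the Gibonacci sequence $\{G_n(a,b)\}_{n\ge1}$ is defined by $G_1=a$, $G_2=b$, $G_{n+1}=G_{n-1}+G_n$. The Lucas numbers are $L_n=G_n(1,3)$. A sequence is complete mod $m$ if every residue class modulo $m$ contains some term of the sequence. *)

From Stdlib Require Import ZArith.
Open Scope Z_scope.

(* gib a b n = G_{n+1}(a,b): gib a b 0 = G_1 = a, gib a b 1 = G_2 = b. *)
Fixpoint gib_aux (a b : Z) (n : nat) : Z * Z :=
  match n with
  | O => (a, b)
  | S k => let (x, y) := gib_aux a b k in (y, x + y)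
  end.

(* G n a b = G_n(a,b) for n >= 1 (index 0 is unused; set to b - a). *)
Definition G (a b : Z) (n : nat) : Z :=
  match n with
  | O => b - a
  | S k => fst (gib_aux a b k)
  end.

Definition L (n : nat) : Z := G 1 3 n.

Definition complete_mod (s : nat -> Z) (m : Z) : Prop :=
  forall r : Z, exists n : nat, (1 <= n)%nat /\ s n mod m = r mod m.

(** We compute in Z[φ], φ² = φ + 1, storing x + yφ as the pair (x, y).
  Multiplication by φ maps (x, y) to (y, x + y), so G_n(a, b) is the first
  coordinate of φ^n ((b - a) + aφ) and L_n that of φ^n (2 + φ).

  The proof classifies the moduli m >= 2 modulo which L is complete: they are
  2, 4, 6, 7, 14 and the powers of 3 (lucas_complete_moduli).
  - Completeness passes to divisors.  L is incomplete mod 5, 8, 12, 18, 21,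
    28 and 49 (a period of L together with a missed residue, checked by
    computation), and mod every prime p other than 2, 3, 5, 7 (module
    LucasModPrime, working in F_p: if 5 is a square, L_n = α^n + β^n takes at
    most p - 1 values; otherwise (2 L_(n+1) - L_n)² = 5 (L_n² ∓ 4) shows that
    L misses every r for which r² - 4 and r² + 4 are nonzero squares, and such
    an r exists by a character sum).  Splitting off one prime factor at a
    time then gives the classification.
  - For m in {2, 4, 6, 7, 14} every Gibonacci sequence is complete, by an
    exhaustive computation over initial pairs mod m.
  - For m = 3^k, a Hensel-type lifting shows that every element of Z[φ]
    prime to 3 is, mod 3^k, an integer unit times a power of φ.  Since
    5 = (2 + φ)(3 - φ), 5 G(a, b) is then a unit multiple of a shift of L
    mod 3^k, and completeness transfers from L to G(a, b). *)

From Stdlib Require Import ZArith Lia List Znumtheory Zpow_facts Setoid Morphisms.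
From mathcomp Require all_boot all_algebra all_field ring zify ssrZ.
Import ListNotations.
Open Scope Z_scope.

(** Arithmetic in Z[φ], φ² = φ + 1; the pair (x, y) stands for x + yφ. *)

Definition qadd (u v : Z * Z) : Z * Z := (fst u + fst v, snd u + snd v).

Definition qmul (u v : Z * Z) : Z * Z :=
  (fst u * fst v + snd u * snd v, fst u * snd v + snd u * fst v + snd u * snd v).

Definition qscale (c : Z) (u : Z * Z) : Z * Z := (c * fst u, c * snd u).

Definition phi : Z * Z := (0, 1).

Fixpoint qpow (u : Z * Z) (n : nat) : Z * Z :=
  match n with O => (1, 0) | S k => qmul u (qpow u k) end.

Ltac qring :=
  repeat match goal with u : (Z * Z)%type |- _ => destruct u end;
  unfold qadd, qmul, qscale, phi; cbn [fst snd]; first [ring | f_equal; ring].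

Lemma qmul_assoc u v w : qmul (qmul u v) w = qmul u (qmul v w).
Proof. qring. Qed.

Lemma qmul_1l u : qmul (1, 0) u = u.
Proof. qring. Qed.

Lemma qscale_1 u : qscale 1 u = u.
Proof. qring. Qed.

Lemma qpow_add u a b : qpow u (a + b) = qmul (qpow u a) (qpow u b).
Proof.
  induction a as [|a IH]; simpl.
  - now rewrite qmul_1l.
  - now rewrite IH, qmul_assoc.
Qed.

Lemma qpow_mul u a b : qpow u (a * b) = qpow (qpow u a) b.
Proof.
  induction b as [|b IH]; simpl.
  - now rewrite Nat.mul_0_r.
  - now rewrite Nat.mul_succ_r, Nat.add_comm, qpow_add, IH.
Qed.

Lemma qpow_1 n : qpow (1, 0) n = (1, 0).
Proof. induction n as [|n IH]; simpl; [reflexivity|]. rewrite IH. qring. Qed.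

Definition gseq (w : Z * Z) (n : nat) : Z := fst (qmul (qpow phi n) w).

Lemma gseq_rec w n : gseq w (S (S n)) = gseq w n + gseq w (S n).
Proof. unfold gseq. simpl qpow. generalize (qpow phi n). intros. qring. Qed.

Lemma gseq_scale c w n : gseq (qscale c w) n = c * gseq w n.
Proof. unfold gseq. generalize (qpow phi n). intros. qring. Qed.

Lemma gseq_shift w j n : gseq (qmul (qpow phi j) w) n = gseq w (n + j).
Proof. unfold gseq. now rewrite qpow_add, qmul_assoc. Qed.

Lemma gib_aux_qpow a b k : gib_aux a b k = qmul (qpow phi k) (a, b).
Proof.
  induction k as [|k IH]; cbn [gib_aux qpow].
  - qring.
  - rewrite IH. generalize (qpow phi k). intros. qring.
Qed.

(* G_n(a, b) is the sequence with initial vector (b - a) + aφ = φ^(-1)(a + bφ). *)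
Lemma G_gseq a b n : G a b n = gseq (b - a, a) n.
Proof.
  unfold gseq. destruct n as [|k]; cbn [G qpow].
  - qring.
  - rewrite gib_aux_qpow. generalize (qpow phi k). intros. qring.
Qed.

Lemma L_gseq n : L n = gseq (2, 1) n.
Proof. apply G_gseq. Qed.

Lemma L_rec n : L (S (S n)) = L n + L (S n).
Proof. rewrite !L_gseq. apply gseq_rec. Qed.

Definition zcong (M x y : Z) : Prop := (M | x - y).

Definition qcong (M : Z) (u v : Z * Z) : Prop :=
  zcong M (fst u) (fst v) /\ zcong M (snd u) (snd v).

#[export] Instance zcong_equiv M : Equivalence (zcong M).
Proof.
  unfold zcong. split.
  - intros x. rewrite Z.sub_diag. apply Z.divide_0_r.
  - intros x y H. replace (y - x) with (- (x - y)) by ring. now apply Z.divide_opp_r.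
  - intros x y z H1 H2. replace (x - z) with ((x - y) + (y - z)) by ring.
    now apply Z.divide_add_r.
Qed.

#[export] Instance zcong_add M : Proper (zcong M ==> zcong M ==> zcong M) Z.add.
Proof.
  unfold zcong. intros x x' H y y' H'.
  replace (x + y - (x' + y')) with ((x - x') + (y - y')) by ring.
  now apply Z.divide_add_r.
Qed.

#[export] Instance zcong_sub M : Proper (zcong M ==> zcong M ==> zcong M) Z.sub.
Proof.
  unfold zcong. intros x x' H y y' H'.
  replace (x - y - (x' - y')) with ((x - x') - (y - y')) by ring.
  now apply Z.divide_sub_r.
Qed.

#[export] Instance zcong_mul M : Proper (zcong M ==> zcong M ==> zcong M) Z.mul.
Proof.
  unfold zcong. intros x x' H y y' H'.
  replace (x * y - x' * y') with ((x - x') * y + x' * (y - y')) by ring.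
  apply Z.divide_add_r; [apply Z.divide_mul_l | apply Z.divide_mul_r]; assumption.
Qed.

#[export] Instance qcong_equiv M : Equivalence (qcong M).
Proof.
  split.
  - intros u. split; reflexivity.
  - intros u v [H1 H2]. split; now symmetry.
  - intros u v w [H1 H2] [H3 H4]. split; etransitivity; eassumption.
Qed.

#[export] Instance fst_cong M : Proper (qcong M ==> zcong M) fst.
Proof. now intros u v [H _]. Qed.

#[export] Instance qadd_cong M : Proper (qcong M ==> qcong M ==> qcong M) qadd.
Proof. intros u u' [H1 H2] v v' [H3 H4]. split; simpl; now rewrite ?H1, ?H2, ?H3, ?H4. Qed.

#[export] Instance qmul_cong M : Proper (qcong M ==> qcong M ==> qcong M) qmul.
Proof. intros u u' [H1 H2] v v' [H3 H4]. split; simpl; now rewrite ?H1, ?H2, ?H3, ?H4. Qed.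

#[export] Instance qscale_cong M : Proper (zcong M ==> qcong M ==> qcong M) qscale.
Proof. intros c c' Hc u u' [H1 H2]. split; simpl; now rewrite Hc, ?H1, ?H2. Qed.

#[export] Instance qpow_cong M : Proper (qcong M ==> eq ==> qcong M) qpow.
Proof.
  intros u u' Hu n n' <-. induction n as [|n IH]; simpl; [reflexivity|].
  now apply qmul_cong.
Qed.

Lemma zcong_iff_mod M x y : 0 < M -> zcong M x y <-> x mod M = y mod M.
Proof.
  intros HM. unfold zcong. split.
  - intros [k Hk]. replace x with (y + k * M) by lia. apply Z_mod_plus_full.
  - intros E. exists (x / M - y / M).
    rewrite (Z.div_mod x M) at 1 by lia. rewrite (Z.div_mod y M) at 1 by lia.
    rewrite E. ring.
Qed.

Lemma zcong_scale T M x y : zcong M x y -> zcong (T * M) (T * x) (T * y).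
Proof.
  intros [k Hk]. exists k. rewrite <- Z.mul_sub_distr_l, Hk. ring.
Qed.

Lemma qcong_scale T M u v : qcong M u v -> qcong (T * M) (qscale T u) (qscale T v).
Proof. intros [H1 H2]. split; now apply zcong_scale. Qed.

Lemma qcong_add_multiple M N u v : (M | N) -> qcong M (qadd u (qscale N v)) u.
Proof.
  intros H. split; unfold zcong; cbn [fst snd qadd qscale];
    [replace (fst u + N * fst v - fst u) with (N * fst v) by ring
    |replace (snd u + N * snd v - snd u) with (N * snd v) by ring];
    now apply Z.divide_mul_l.
Qed.

Definition unit_mod (M x : Z) : Prop := exists u, zcong M (x * u) 1.

Lemma unit_mod_cancel M k x y : unit_mod M k -> zcong M (k * x) (k * y) -> zcong M x y.
Proof.
  intros [u Hu] H.
  rewrite <- (Z.mul_1_l x), <- (Z.mul_1_l y), <- Hu.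
  replace (k * u * x) with (u * (k * x)) by ring.
  replace (k * u * y) with (u * (k * y)) by ring.
  now rewrite H.
Qed.

Lemma complete_mod_ext (s t : nat -> Z) m :
  (forall n, s n = t n) -> complete_mod s m -> complete_mod t m.
Proof.
  intros E H r. destruct (H r) as [n [Hn Hr]]. exists n. now rewrite <- E.
Qed.

Lemma complete_mod_divisor s m d :
  0 < d -> 0 < m -> (d | m) -> complete_mod s m -> complete_mod s d.
Proof.
  intros Hd Hm Hdm H r. destruct (H r) as [n [Hn Hr]]. exists n. split; [exact Hn|].
  rewrite (Zmod_div_mod d m (s n)), (Zmod_div_mod d m r) by assumption. congruence.
Qed.

Lemma gseq_period M w P :
  qcong M (qmul (qpow phi P) w) w ->
  forall q x, zcong M (gseq w (q * P + x)) (gseq w x).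
Proof.
  intros HP q x. unfold gseq.
  rewrite Nat.add_comm, qpow_add, qmul_assoc.
  apply fst_cong, qmul_cong; [reflexivity|].
  induction q as [|q IH]; simpl; [now rewrite qmul_1l|].
  rewrite qpow_add, qmul_assoc, IH. exact HP.
Qed.

Definition is_period (m : Z) (w : Z * Z) (P : nat) : bool :=
  let v := qmul (qpow phi P) w in
  ((fst v - fst w) mod m =? 0) && ((snd v - snd w) mod m =? 0).

Definition misses (m : Z) (w : Z * Z) (P : nat) (r : Z) : bool :=
  forallb (fun k => negb (gseq w k mod m =? r mod m)) (seq 0 P).

Lemma incomplete_of_certificate m w P r :
  0 < m -> (0 < P)%nat -> is_period m w P = true -> misses m w P r = true ->
  ~ complete_mod (gseq w) m.
Proof.
  intros Hm HP Hper Hmiss H.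
  assert (Hcong : qcong m (qmul (qpow phi P) w) w).
  { unfold is_period in Hper. apply andb_prop in Hper as [H1 H2].
    apply Z.eqb_eq, Z.mod_divide in H1, H2; try lia. now split. }
  destruct (H r) as [n [_ Hn]].
  pose proof (gseq_period m w P Hcong (n / P) (n mod P)) as Hred.
  rewrite Nat.mul_comm, <- Nat.div_mod in Hred by lia.
  apply zcong_iff_mod in Hred; [|exact Hm].
  unfold misses in Hmiss. rewrite forallb_forall in Hmiss.
  specialize (Hmiss (n mod P)%nat).
  rewrite in_seq, <- Hred, Hn, Z.eqb_refl in Hmiss.
  assert (n mod P < P)%nat by (apply Nat.mod_upper_bound; lia).
  specialize (Hmiss ltac:(lia)). discriminate.
Qed.

Lemma lucas_incomplete_certified d :
  In d [5; 8; 12; 18; 21; 28; 49] -> ~ complete_mod L d.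
Proof.
  intros Hd HL. apply (complete_mod_ext _ (gseq (2, 1))) in HL; [|exact L_gseq].
  revert HL.
  simpl in Hd; repeat destruct Hd as [<- | Hd]; try contradiction;
  [ apply (incomplete_of_certificate 5 _ 4 0)
  | apply (incomplete_of_certificate 8 _ 12 0)
  | apply (incomplete_of_certificate 12 _ 24 0)
  | apply (incomplete_of_certificate 18 _ 24 5)
  | apply (incomplete_of_certificate 21 _ 16 0)
  | apply (incomplete_of_certificate 28 _ 48 0)
  | apply (incomplete_of_certificate 49 _ 112 5) ];
  solve [lia | vm_compute; reflexivity].
Qed.

Definition residues (m : Z) : list Z := map Z.of_nat (seq 0 (Z.to_nat m)).

Lemma mod_in_residues m x : 0 < m -> In (x mod m) (residues m).
Proof.
  intros Hm. apply in_map_iff. exists (Z.to_nat (x mod m)).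
  pose proof (Z.mod_pos_bound x m Hm). split; [lia|]. apply in_seq. lia.
Qed.

Definition all_complete_within (m : Z) (K : nat) : bool :=
  forallb (fun a => forallb (fun b =>
      orb (negb (Z.gcd (Z.gcd a b) m =? 1))
      (forallb (fun r => existsb (fun k => G a b k mod m =? r) (seq 1 K)) (residues m)))
    (residues m)) (residues m).

Lemma G_cong m a b a' b' n :
  zcong m a a' -> zcong m b b' -> zcong m (G a b n) (G a' b' n).
Proof.
  intros Ha Hb. rewrite !G_gseq. unfold gseq.
  apply fst_cong, qmul_cong; [reflexivity|]. split; simpl; now rewrite ?Ha, ?Hb.
Qed.

Lemma gcd_residues_coprime m a b :
  0 < m -> Z.gcd a b = 1 -> Z.gcd (Z.gcd (a mod m) (b mod m)) m = 1.
Proof.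
  intros Hm Hab.
  set (g := Z.gcd (Z.gcd (a mod m) (b mod m)) m).
  assert (Hgm : (g | m)) by apply Z.gcd_divide_r.
  assert (Hg_mod : forall x, (g | x mod m) -> (g | x)).
  { intros x Hx. rewrite (Z.div_mod x m) by lia.
    apply Z.divide_add_r; [apply Z.divide_mul_l|]; assumption. }
  assert (Hga : (g | a)).
  { apply Hg_mod. eapply Z.divide_trans; [apply Z.gcd_divide_l|apply Z.gcd_divide_l]. }
  assert (Hgb : (g | b)).
  { apply Hg_mod. eapply Z.divide_trans; [apply Z.gcd_divide_l|apply Z.gcd_divide_r]. }
  assert (Hg1 : (g | 1)) by (rewrite <- Hab; now apply Z.gcd_greatest).
  apply Z.divide_1_r_nonneg in Hg1; [exact Hg1|apply Z.gcd_nonneg].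
Qed.

Lemma complete_of_certificate m K :
  0 < m -> all_complete_within m K = true ->
  forall a b, Z.gcd a b = 1 -> complete_mod (G a b) m.
Proof.
  intros Hm Hcheck a b Hab r.
  unfold all_complete_within in Hcheck. rewrite forallb_forall in Hcheck.
  specialize (Hcheck _ (mod_in_residues m a Hm)). rewrite forallb_forall in Hcheck.
  specialize (Hcheck _ (mod_in_residues m b Hm)).
  rewrite gcd_residues_coprime, Z.eqb_refl in Hcheck by assumption.
  simpl in Hcheck. rewrite forallb_forall in Hcheck.
  specialize (Hcheck _ (mod_in_residues m r Hm)).
  apply existsb_exists in Hcheck as [k [Hk Hkr]]. apply in_seq in Hk.
  apply Z.eqb_eq in Hkr. exists k. split; [lia|].
  rewrite <- Hkr. apply zcong_iff_mod; [exact Hm|].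
  apply G_cong; apply zcong_iff_mod; try exact Hm; now rewrite Zmod_mod.
Qed.

Lemma gib_complete_certified m :
  In m [2; 4; 6; 7; 14] -> forall a b, Z.gcd a b = 1 -> complete_mod (G a b) m.
Proof.
  intros Hm. apply (complete_of_certificate m 48).
  - simpl in Hm; lia.
  - simpl in Hm; repeat destruct Hm as [<- | Hm]; try contradiction;
      vm_compute; reflexivity.
Qed.

Lemma pow3_succ K : 3 ^ Z.of_nat (S K) = 3 * 3 ^ Z.of_nat K.
Proof. rewrite Nat2Z.inj_succ, Z.pow_succ_r by lia. reflexivity. Qed.

Lemma phi_pow_3adic K :
  exists th, qpow phi (8 * 3 ^ K) = qadd (1, 0) (qscale (3 ^ Z.of_nat (S K)) th)
             /\ ~ (3 | snd th).
Proof.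
  induction K as [|K [th [Hth H3]]].
  - exists (4, 7). split; [vm_compute; reflexivity|].
    intros H. apply Z.mod_divide in H; [|lia]. discriminate.
  - (* cube: (1 + Tθ)^3 = 1 + 3T(θ + 3S θ² + 3S² θ³) with T = 3S *)
    set (S0 := 3 ^ Z.of_nat K).
    exists (qadd th (qadd (qscale (3 * S0) (qmul th th))
                          (qscale (3 * S0 * S0) (qmul th (qmul th th))))).
    split.
    + replace (8 * 3 ^ S K)%nat with (8 * 3 ^ K * 3)%nat
        by (rewrite Nat.pow_succ_r'; lia).
      rewrite qpow_mul, Hth, !pow3_succ. fold S0. cbn [qpow]. qring.
    + destruct th as [t1 t2]; cbn [fst snd qadd qscale qmul] in *. intros Hd. apply H3.
      match type of Hd with (3 | ?e) =>
        replace t2 with (e - 3 * (S0 * (t1 * t2 + t2 * t1 + t2 * t2) + S0 * S0 *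
          (t1 * (t1 * t2 + t2 * t1 + t2 * t2) + t2 * (t1 * t1 + t2 * t2)
           + t2 * (t1 * t2 + t2 * t1 + t2 * t2)))) by ring end.
      apply Z.divide_sub_r; [exact Hd | apply Z.divide_factor_l].
Qed.

Lemma phi_period_pow3 K : qcong (3 ^ Z.of_nat (S K)) (qpow phi (8 * 3 ^ K)) (1, 0).
Proof.
  destruct (phi_pow_3adic K) as [th [Hth _]]. rewrite Hth.
  apply qcong_add_multiple, Z.divide_refl.
Qed.

Lemma binomial_mod T th t :
  (3 * T | T * T) ->
  qcong (3 * T) (qpow (qadd (1, 0) (qscale T th)) t)
                (qadd (1, 0) (qscale (T * Z.of_nat t) th)).
Proof.
  intros HT. induction t as [|t IH]; cbn [qpow].
  - split; simpl; rewrite ?Z.mul_0_r; reflexivity.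
  - rewrite IH.
    replace (qmul _ _) with (qadd (qadd (1, 0) (qscale (T * Z.of_nat (S t)) th))
                                  (qscale (T * T) (qscale (Z.of_nat t) (qmul th th))))
      by (rewrite Nat2Z.inj_succ; unfold Z.succ; qring).
    now apply qcong_add_multiple.
Qed.

Definition primitive3 (w : Z * Z) : Prop := ~ ((3 | fst w) /\ (3 | snd w)).

Lemma sq_mod3 x : ~ (3 | x) -> zcong 3 (x * x) 1.
Proof.
  intros H. unfold zcong.
  pose proof (Z.div_mod x 3 ltac:(lia)) as Hx.
  pose proof (Z.mod_pos_bound x 3 ltac:(lia)).
  set (q := x / 3) in *. set (r := x mod 3) in *.
  assert (r = 0 \/ r = 1 \/ r = 2) as [Hr|[Hr|Hr]] by lia.
  - exfalso. apply H. exists q. lia.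
  - exists (3 * q * q + 2 * q). rewrite Hx, Hr. ring.
  - exists (3 * q * q + 4 * q + 1). rewrite Hx, Hr. ring.
Qed.

Lemma not_div3_cong x y : zcong 3 x y -> ~ (3 | y) -> ~ (3 | x).
Proof.
  intros Hxy Hy Hx. apply Hy. replace y with (x - (x - y)) by ring.
  now apply Z.divide_sub_r.
Qed.

Definition phi_powers_cover_mod3 : bool :=
  forallb (fun x => forallb (fun y =>
      orb (andb (x =? 0) (y =? 0))
          (existsb (fun j => andb ((fst (qpow phi j) - x) mod 3 =? 0)
                                  ((snd (qpow phi j) - y) mod 3 =? 0)) (seq 0 8)))
    (residues 3)) (residues 3).

(* φ generates the multiplicative group of Z[φ]/3, the field with 9 elements. *)
Lemma primitive_phi_power_mod3 w : primitive3 w -> exists j, qcong 3 w (qpow phi j).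
Proof.
  intros Hw.
  assert (Hcheck : phi_powers_cover_mod3 = true) by (vm_compute; reflexivity).
  unfold phi_powers_cover_mod3 in Hcheck. rewrite forallb_forall in Hcheck.
  specialize (Hcheck _ (mod_in_residues 3 (fst w) ltac:(lia))).
  rewrite forallb_forall in Hcheck.
  specialize (Hcheck _ (mod_in_residues 3 (snd w) ltac:(lia))).
  apply Bool.orb_true_iff in Hcheck as [H0 | Hj].
  - exfalso. apply Hw. apply andb_prop in H0 as [H1 H2].
    apply Z.eqb_eq, Z.mod_divide in H1, H2; try lia. now split.
  - apply existsb_exists in Hj as [j [_ Hj]]. exists j.
    apply andb_prop in Hj as [H1 H2].
    apply Z.eqb_eq, Z.mod_divide in H1, H2; try lia.
    split; [transitivity (fst w mod 3) | transitivity (snd w mod 3)];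
      try (symmetry; assumption);
      apply zcong_iff_mod; try lia; now rewrite Zmod_mod.
Qed.

(* Since θ's φ-coordinate is a unit mod 3, any z is ≡ e + tθ mod 3 with e, t integers. *)
Lemma solve_mod3 th z :
  ~ (3 | snd th) -> exists e t, qcong 3 (qadd (e, 0) (qscale (Z.of_nat t) th)) z.
Proof.
  intros H3.
  set (t := Z.to_nat ((snd z * snd th) mod 3)).
  assert (Ht : zcong 3 (Z.of_nat t) (snd z * snd th)).
  { unfold t. rewrite Z2Nat.id by (apply Z.mod_pos_bound; lia).
    apply zcong_iff_mod; [lia|]. apply Zmod_mod. }
  exists (fst z - Z.of_nat t * fst th), t. split; cbn [fst snd qadd qscale].
  - replace (fst z - Z.of_nat t * fst th + Z.of_nat t * fst th) with (fst z) by ring.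
    reflexivity.
  - rewrite Ht, Z.add_0_l, <- Z.mul_assoc, (sq_mod3 _ H3), Z.mul_1_r. reflexivity.
Qed.

Lemma lift_step K w c j :
  ~ (3 | c) -> qcong (3 ^ Z.of_nat (S K)) w (qscale c (qpow phi j)) ->
  exists c' j', ~ (3 | c') /\ qcong (3 ^ Z.of_nat (S (S K))) w (qscale c' (qpow phi j')).
Proof.
  intros Hc Hw.
  destruct (phi_pow_3adic K) as [th [Hth H3]].
  set (T := 3 ^ Z.of_nat (S K)) in *.
  assert (HT : 3 ^ Z.of_nat (S (S K)) = 3 * T) by apply pow3_succ.
  assert (HTT : (3 * T | T * T)).
  { unfold T. rewrite pow3_succ. exists (3 ^ Z.of_nat K). ring. }
  (* write w = cφ^j + Tδ *)
  set (v := qscale c (qpow phi j)) in *.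
  destruct Hw as [[d1 Hd1] [d2 Hd2]].
  set (delta := (d1, d2)).
  assert (Hwv : w = qadd v (qscale T delta)).
  { destruct w, v. unfold qadd, qscale, delta. cbn [fst snd] in *. f_equal; lia. }
  (* correct c and j by the first-order term: c·φ^j·(e + tθ) ≡ δ mod 3 *)
  destruct (solve_mod3 th (qscale c (qmul (qpow phi (7 * j)) delta)) H3) as [e [t Hz]].
  assert (Hcorr : qcong 3 (qscale c (qmul (qpow phi j) (qadd (e, 0) (qscale (Z.of_nat t) th))))
                          delta).
  { rewrite Hz.
    replace (qscale c (qmul (qpow phi j) (qscale c (qmul (qpow phi (7 * j)) delta))))
      with (qscale (c * c) (qmul (qpow (qpow phi 8) j) delta))
      by (rewrite <- qpow_mul; replace (8 * j)%nat with (j + 7 * j)%nat by lia;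
          rewrite qpow_add; generalize (qpow phi j) (qpow phi (7 * j)); intros; qring).
    assert (H8 : qcong 3 (qpow phi 8) (1, 0)) by exact (phi_period_pow3 0).
    rewrite (sq_mod3 c Hc), H8, qpow_1, qmul_1l, qscale_1. reflexivity. }
  exists (c * (1 + T * e)), (j + 8 * 3 ^ K * t)%nat. split.
  - apply (not_div3_cong _ c); [|exact Hc].
    unfold T. rewrite pow3_succ. exists (c * 3 ^ Z.of_nat K * e). ring.
  - rewrite HT, Hwv, qpow_add, qpow_mul, Hth. fold T.
    rewrite (binomial_mod T th t HTT).
    replace (qscale (c * (1 + T * e))
               (qmul (qpow phi j) (qadd (1, 0) (qscale (T * Z.of_nat t) th))))
      with (qadd (qadd v (qscale T (qscale c (qmul (qpow phi j)
                                  (qadd (e, 0) (qscale (Z.of_nat t) th))))))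
                 (qscale (T * T) (qscale (c * e * Z.of_nat t) (qmul (qpow phi j) th))))
      by (unfold v; generalize (qpow phi j); intros; qring).
    rewrite (qcong_add_multiple _ _ _ _ HTT).
    apply qadd_cong; [reflexivity|].
    rewrite Z.mul_comm. apply qcong_scale. now symmetry.
Qed.

Lemma primitive_unit_phi_power K w :
  primitive3 w ->
  exists c j, ~ (3 | c) /\ qcong (3 ^ Z.of_nat (S K)) w (qscale c (qpow phi j)).
Proof.
  intros Hw. induction K as [|K [c [j [Hc Hcj]]]].
  - destruct (primitive_phi_power_mod3 w Hw) as [j Hj]. exists 1, j. split.
    + intros H. apply Z.divide_pos_le in H; lia.
    + now rewrite qscale_1.
  - exact (lift_step K w c j Hc Hcj).
Qed.

Lemma unit_mod_pow3 K x : ~ (3 | x) -> unit_mod (3 ^ Z.of_nat (S K)) x.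
Proof.
  intros Hx.
  assert (H : rel_prime x (3 ^ Z.of_nat (S K))).
  { apply rel_prime_Zpower_r; [lia|].
    apply rel_prime_sym, prime_rel_prime; [exact prime_3 | exact Hx]. }
  destruct (rel_prime_bezout _ _ H) as [u v Huv]. exists u, (- v). lia.
Qed.

Lemma primitive_twist a b : Z.gcd a b = 1 -> primitive3 (qmul (b - a, a) (3, -1)).
Proof.
  intros Hab [H1 H2]. cbn [qmul fst snd] in H1, H2.
  assert (Ha : (3 | a)).
  { replace a with (3 * (b - a) - ((b - a) * 3 + a * -1)) by ring.
    apply Z.divide_sub_r; [apply Z.divide_factor_l | exact H1]. }
  assert (Hb : (3 | b)).
  { replace b with (3 * a - ((b - a) * -1 + a * 3 + a * -1)) by ring.
    apply Z.divide_sub_r; [apply Z.divide_mul_r, Ha | exact H2]. }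
  assert (H3 : (3 | 1)) by (rewrite <- Hab; now apply Z.gcd_greatest).
  apply Z.divide_pos_le in H3; lia.
Qed.

Lemma complete_transfer M w v k c j P :
  0 < M -> (0 < P)%nat -> qcong M (qpow phi P) (1, 0) ->
  unit_mod M k -> unit_mod M c ->
  qcong M (qscale k w) (qscale c (qmul (qpow phi j) v)) ->
  complete_mod (gseq v) M -> complete_mod (gseq w) M.
Proof.
  intros HM HP Hper Hk [uc Hc] Hw Hv r.
  destruct (Hv (uc * k * r)) as [n0 [Hn0 Hr]].
  exists (n0 + j * (P - 1))%nat. split; [nia|].
  apply zcong_iff_mod; [exact HM|].
  apply (unit_mod_cancel M k); [exact Hk|].
  rewrite <- gseq_scale.
  transitivity (gseq (qscale c (qmul (qpow phi j) v)) (n0 + j * (P - 1))).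
  { unfold gseq. now rewrite Hw. }
  rewrite gseq_scale, gseq_shift.
  replace (n0 + j * (P - 1) + j)%nat with (j * P + n0)%nat
    by (destruct P as [|P']; [lia|]; rewrite Nat.sub_succ, Nat.sub_0_r; nia).
  assert (HvP : qcong M (qmul (qpow phi P) v) v) by now rewrite Hper, qmul_1l.
  rewrite (gseq_period M v P HvP j n0).
  apply zcong_iff_mod in Hr; [|exact HM]. rewrite Hr.
  replace (c * (uc * k * r)) with (c * uc * (k * r)) by ring.
  now rewrite Hc, Z.mul_1_l.
Qed.

(* Every Gibonacci sequence is complete modulo 3^(K+1) when L is.  The key
   identity is 5 = (2 + φ)(3 - φ). *)
Lemma gib_complete_pow3 K :
  complete_mod L (3 ^ Z.of_nat (S K)) ->
  forall a b, Z.gcd a b = 1 -> complete_mod (G a b) (3 ^ Z.of_nat (S K)).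
Proof.
  intros HL a b Hab.
  apply (complete_mod_ext (gseq (b - a, a))); [intros n; symmetry; apply G_gseq|].
  destruct (primitive_unit_phi_power K _ (primitive_twist a b Hab)) as [c [j [Hc Hcj]]].
  apply (complete_transfer _ _ (2, 1) 5 c j (8 * 3 ^ K)).
  - apply Z.pow_pos_nonneg; lia.
  - pose proof (Nat.pow_nonzero 3 K). lia.
  - apply phi_period_pow3.
  - apply unit_mod_pow3. intros H. apply Z.mod_divide in H; [discriminate | lia].
  - now apply unit_mod_pow3.
  - replace (qscale 5 (b - a, a)) with (qmul (qmul (b - a, a) (3, -1)) (2, 1)) by qring.
    rewrite Hcj. replace (qscale c (qmul (qpow phi j) (2, 1)))
      with (qmul (qscale c (qpow phi j)) (2, 1)) by (generalize (qpow phi j); intros; qring).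
    reflexivity.
  - exact (complete_mod_ext _ _ _ L_gseq HL).
Qed.

Inductive lucas_modulus : Z -> Prop :=
  | lucas_modulus_2 : lucas_modulus 2
  | lucas_modulus_4 : lucas_modulus 4
  | lucas_modulus_6 : lucas_modulus 6
  | lucas_modulus_7 : lucas_modulus 7
  | lucas_modulus_14 : lucas_modulus 14
  | lucas_modulus_pow3 K : lucas_modulus (3 ^ Z.of_nat (S K)).

Lemma prime_factor m : 2 <= m -> exists p q, prime p /\ 1 <= q /\ m = p * q.
Proof.
  intros Hm. assert (H0 : 0 <= m) by lia. revert Hm. pattern m.
  apply Z_lt_induction; [|exact H0]. clear m H0. intros m IH Hm.
  destruct (prime_dec m) as [Hp | Hp].
  - exists m, 1. split; [exact Hp | lia].
  - destruct (not_prime_divide m ltac:(lia) Hp) as [d [Hd [k Hk]]].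
    destruct (IH d ltac:(lia) ltac:(lia)) as [p [q [Hpr [Hq ->]]]].
    exists p, (q * k). split; [exact Hpr | nia].
Qed.

Lemma lucas_incomplete_multiple d n :
  In d [5; 8; 12; 18; 21; 28; 49] -> 0 < n -> (d | n) -> ~ complete_mod L n.
Proof.
  intros Hd Hn Hdn HL. apply (lucas_incomplete_certified d Hd).
  apply (complete_mod_divisor _ n); [simpl in Hd; lia | exact Hn | exact Hdn | exact HL].
Qed.

Ltac kill_multiple_of d :=
  match goal with HL : complete_mod L ?n |- _ =>
    exfalso; apply (lucas_incomplete_multiple d n); [simpl; tauto | lia | | exact HL];
    apply Z.mod_divide; [lia | reflexivity]
  end.

Section Classification.

Hypothesis lucas_incomplete_prime :
  forall p, prime p -> p <> 2 -> p <> 3 -> p <> 5 -> p <> 7 -> ~ complete_mod L p.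

Lemma lucas_complete_prime p : prime p -> complete_mod L p -> p = 2 \/ p = 3 \/ p = 7.
Proof.
  intros Hp HL.
  destruct (Z.eq_dec p 5) as [-> | H5].
  { exfalso. exact (lucas_incomplete_certified 5 ltac:(simpl; tauto) HL). }
  destruct (Z.eq_dec p 2); [tauto|]. destruct (Z.eq_dec p 3); [tauto|].
  destruct (Z.eq_dec p 7); [tauto|].
  exfalso. exact (lucas_incomplete_prime p Hp ltac:(assumption) ltac:(assumption)
                    H5 ltac:(assumption) HL).
Qed.

(* Multiplying a Lucas modulus by one of the primes 2, 3, 7 keeps L complete
   only in the listed cases; all others are multiples of a certified modulus. *)
Lemma lucas_modulus_mul p q :
  p = 2 \/ p = 3 \/ p = 7 -> lucas_modulus q -> complete_mod L (p * q) ->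
  lucas_modulus (p * q).
Proof.
  intros Hp Hq HL.
  destruct Hq as [| | | | | K]; destruct Hp as [-> | [-> | ->]];
    try solve [constructor | kill_multiple_of 8 | kill_multiple_of 12 | kill_multiple_of 21
              | kill_multiple_of 28 | kill_multiple_of 49 | kill_multiple_of 18].
  all: pose proof (Z.pow_pos_nonneg 3 (Z.of_nat (S K)) ltac:(lia) ltac:(lia)).
  - destruct K as [|K]; [exact lucas_modulus_6|].
    exfalso. revert HL. apply (lucas_incomplete_multiple 18); [simpl; tauto | lia |].
    rewrite !pow3_succ. exists (3 ^ Z.of_nat K). ring.
  - rewrite <- pow3_succ. apply lucas_modulus_pow3.
  - exfalso. revert HL. apply (lucas_incomplete_multiple 21); [simpl; tauto | lia |].
    rewrite pow3_succ. exists (3 ^ Z.of_nat K). ring.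
Qed.

Lemma lucas_complete_moduli m : 2 <= m -> complete_mod L m -> lucas_modulus m.
Proof.
  intros Hm. assert (H0 : 0 <= m) by lia. revert Hm. pattern m.
  apply Z_lt_induction; [|exact H0]. clear m H0. intros m IH Hm HL.
  destruct (prime_factor m Hm) as [p [q [Hp [Hq ->]]]].
  pose proof (prime_ge_2 p Hp).
  assert (Hp237 : p = 2 \/ p = 3 \/ p = 7).
  { apply lucas_complete_prime; [exact Hp|].
    apply (complete_mod_divisor _ (p * q)); [lia | nia | exists q; ring | exact HL]. }
  destruct (Z.eq_dec q 1) as [-> | Hq1].
  - rewrite Z.mul_1_r.
    destruct Hp237 as [-> | [-> | ->]];
      [exact lucas_modulus_2 | exact (lucas_modulus_pow3 0) | exact lucas_modulus_7].
  - apply lucas_modulus_mul; [exact Hp237 | | exact HL].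
    apply IH; [nia | lia |].
    apply (complete_mod_divisor _ (p * q)); [lia | nia | exists p; ring | exact HL].
Qed.

End Classification.

Module LucasModPrime.

Import all_boot all_algebra all_field ring zify ssrZ.
Set Implicit Arguments. Unset Strict Implicit. Unset Printing Implicit Defensive.
Import GRing.Theory.

Section PrimeField.

Variable p : nat.
Hypothesis p_prime : prime p.

Local Open Scope ring_scope.

Lemma fermat (x : 'F_p) : x != 0 -> x ^+ p.-1 = 1.
Proof.
  move=> nx. have e := expf_card x. rewrite card_Fp // in e.
  apply: (mulfI nx). by rewrite mulr1 -exprS prednK // prime_gt0.
Qed.

Lemma natF_eq0 n : (n%:R : 'F_p) = 0 -> (p %| n)%N.
Proof. move=> e. have := val_Fp_nat p_prime n. rewrite e /= => en. by apply/eqP; rewrite -en. Qed.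

Lemma natF_neq0 n : (0 < n < p)%N -> (n%:R : 'F_p) != 0.
Proof.
  move=> /andP [h1 h2]. apply/negP => /eqP /natF_eq0 hd.
  by have := dvdn_leq h1 hd; rewrite leqNgt h2.
Qed.

Lemma natF_inj a b : (a < p)%N -> (b < p)%N -> (a%:R : 'F_p) = b%:R -> a = b.
Proof.
  move=> ha hb e. have := val_Fp_nat p_prime a. have := val_Fp_nat p_prime b.
  rewrite e => ->. by rewrite !modn_small.
Qed.

Lemma natF_eq0_prime q : prime q -> (q%:R : 'F_p) = 0 -> p = q.
Proof.
  move=> hq /natF_eq0 hd. apply/(prime_nt_dvdP hq) => //.
  by rewrite neq_ltn prime_gt1 ?orbT.
Qed.

Lemma pow_mod_pred (x : 'F_p) n : x != 0 -> x ^+ n = x ^+ (n %% p.-1).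
Proof. move=> nx. by rewrite {1}(divn_eq n p.-1) exprD mulnC exprM fermat // expr1n mul1r. Qed.

Lemma sum_pow0 : \sum_(r : 'F_p) r ^+ 0 = 0.
Proof. under eq_bigr do rewrite expr0. by rewrite sumr_const card_Fp // pchar_Fp_0. Qed.

Lemma sum_pow_multiple k : (0 < k)%N -> (p.-1 %| k)%N -> \sum_(r : 'F_p) r ^+ k = -1.
Proof.
  move=> hk /dvdnP [q hq]. rewrite (bigD1 0) //= expr0n /= gtn_eqF // add0r.
  transitivity (\sum_(r : 'F_p | r != 0) (1 : 'F_p)).
  { apply: eq_bigr => r hr. by rewrite hq mulnC exprM fermat // expr1n. }
  rewrite sumr_const.
  have -> : #|[pred r : 'F_p | r != 0]| = p.-1 by rewrite -[LHS]/#|predC1 0| cardC1 card_Fp.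
  apply/eqP; rewrite -addr_eq0 natr1 prednK ?prime_gt0 //. by rewrite pchar_Fp_0.
Qed.

(* For 0 < k not a multiple of p - 1 some a has a ^+ k != 1 (else X^(k mod (p-1)) - 1
   would have p - 1 roots), and the sum is invariant under r |-> a r. *)
Lemma sum_pow_nonmultiple k : (0 < k)%N -> ~~ (p.-1 %| k)%N -> \sum_(r : 'F_p) r ^+ k = 0.
Proof.
  move=> hk nd.
  have hp1 : (0 < p.-1)%N by have := prime_gt1 p_prime; lia.
  set k' := (k %% p.-1)%N.
  have hk' : (0 < k')%N by rewrite lt0n.
  have hk'p : (k' < p.-1)%N by rewrite ltn_mod.
  have pow_red (a : 'F_p) : a != 0 -> a ^+ k = a ^+ k'.
  { move=> na. by rewrite {1}(divn_eq k p.-1) exprD mulnC exprM fermat // expr1n mul1r. }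
  have /existsP [a /andP [ha0 hak]] : [exists a : 'F_p, (a != 0) && (a ^+ k != 1)].
  { apply: contraT => /negP nE. exfalso.
    have H := @max_poly_roots _ ('X^k' - 1%:P) (enum (predC1 (0 : 'F_p))).
    rewrite size_XnsubC // -cardE cardC1 card_Fp // in H.
    have : (p.-1 < k'.+1)%N.
    { apply: H; first by rewrite -size_poly_eq0 size_XnsubC.
      - apply/allP => a. rewrite mem_enum /= => ha. rewrite rootE !hornerE subr_eq0.
        rewrite -pow_red //. apply/negPn/negP => hak. apply: nE.
        apply/existsP. exists a. by rewrite hak andbT.
      - exact: enum_uniq. }
    lia. }
  have e : \sum_(r : 'F_p) r ^+ k = a ^+ k * \sum_(r : 'F_p) r ^+ k.
  { rewrite mulr_sumr (reindex_inj (mulfI ha0)) /=.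
    apply: eq_bigr => r _. by rewrite exprMn. }
  apply/eqP. move/eqP: e. rewrite -subr_eq0 -{1}[\sum_r _]mul1r -mulrBl mulf_eq0.
  case/orP => // /eqP hz. exfalso. move: hak. by rewrite eq_sym -subr_eq0 hz eqxx.
Qed.

Lemma sum_binomial_pow (c : 'F_p) d n :
  \sum_(r : 'F_p) (c + r ^+ d) ^+ n =
  \sum_(i < n.+1) (c ^+ (n - i) *+ 'C(n, i)) * \sum_(r : 'F_p) r ^+ (d * i).
Proof.
  under eq_bigr do rewrite exprDn. rewrite exchange_big /=. apply: eq_bigr => i _.
  rewrite mulr_sumr. apply: eq_bigr => r _. by rewrite -exprM mulrnAl.
Qed.

(* If d·i is a multiple of p - 1 for no 0 < i < n but for i = n, only the top
   binomial term survives. *)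
Lemma sum_shifted_pow (c : 'F_p) d n : (0 < n)%N -> (0 < d)%N ->
  (forall i, (0 < i <= n)%N -> (p.-1 %| d * i)%N = (i == n)) ->
  \sum_(r : 'F_p) (c + r ^+ d) ^+ n = -1.
Proof.
  move=> hn hd hdiv. rewrite sum_binomial_pow big_ord_recr /= subnn expr0 binn mulr1n mul1r.
  rewrite sum_pow_multiple; first last.
  - by rewrite hdiv ?eqxx ?hn ?leqnn.
  - by rewrite muln_gt0 hd hn.
  rewrite big1 ?add0r // => i _.
  have hi := ltn_ord i.
  case: (posnP i) => [-> | hi0].
  - by rewrite muln0 sum_pow0 mulr0.
  - rewrite sum_pow_nonmultiple ?mulr0 //; first by rewrite muln_gt0 hd hi0.
    by rewrite hdiv ?ltn_eqF // hi0 ltnW.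
Qed.

Definition toF (z : Z) : 'F_p := (int_of_Z z)%:~R.

Lemma toF_add x y : toF (Z.add x y) = toF x + toF y.
Proof. by rewrite /toF -intrD -raddfD. Qed.

Lemma toF_mul x y : toF (Z.mul x y) = toF x * toF y.
Proof. by rewrite /toF -intrM -rmorphM. Qed.

Lemma toF_nat n : toF (Z.of_nat n) = n%:R.
Proof.
  rewrite /toF. have -> : int_of_Z (Z.of_nat n) = Posz n.
  { by rewrite -[Z.of_nat n]/(Z_of_int (Posz n)) Z_of_intK. }
  done.
Qed.

Lemma toF_cong x y : zcong (Z.of_nat p) x y -> toF x = toF y.
Proof.
  case=> k hk. have -> : x = Z.add y (Z.mul k (Z.of_nat p)) by lia.
  by rewrite toF_add toF_mul toF_nat pchar_Fp_0 // mulr0 addr0.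
Qed.

Definition lucasF (n : nat) : 'F_p := toF (L n).

Lemma lucasF_rec n : lucasF n.+2 = lucasF n + lucasF n.+1.
Proof. by rewrite /lucasF L_rec toF_add. Qed.

Lemma lucasF_invariant n :
  lucasF n.+1 ^+ 2 - lucasF n * lucasF n.+1 - lucasF n ^+ 2 = -5 * (-1) ^+ n.
Proof.
  elim: n => [|n IH].
  - have -> : lucasF 0 = 2%:R by rewrite /lucasF /toF.
    have -> : lucasF 1 = 1 by rewrite /lucasF /toF.
    rewrite expr0. ring.
  - rewrite lucasF_rec [(-1) ^+ n.+1]exprS.
    have -> : -5 * (-1 * (-1) ^+ n) = - (-5 * (-1) ^+ n) :> 'F_p by ring.
    rewrite -IH. ring.
Qed.

(* The identity L_n² - 5 F_n² = 4 (-1)^n, multiplied by 5, with 5 F_n = 2 L_(n+1) - L_n. *)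
Lemma lucasF_disc n :
  (2%:R * lucasF n.+1 - lucasF n) ^+ 2 = 5 * (lucasF n ^+ 2 - 4 * (-1) ^+ n).
Proof.
  have e := lucasF_invariant n.
  have -> : 5 * (lucasF n ^+ 2 - 4 * (-1) ^+ n) = 5 * lucasF n ^+ 2 + 4 * (-5 * (-1) ^+ n) by ring.
  rewrite -e. ring.
Qed.

Lemma lucasF_binet_roots (x y : 'F_p) :
  x + y = 1 -> x ^+ 2 = x + 1 -> y ^+ 2 = y + 1 -> forall n, lucasF n = x ^+ n + y ^+ n.
Proof.
  move=> hs hx hy.
  have step (z : 'F_p) : z ^+ 2 = z + 1 -> forall n, z ^+ n.+2 = z ^+ n + z ^+ n.+1.
  { move=> hz n. by rewrite !exprS mulrA -expr2 hz mulrDl mul1r addrC. }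
  suff pair n : lucasF n = x ^+ n + y ^+ n /\ lucasF n.+1 = x ^+ n.+1 + y ^+ n.+1.
  { by move=> n; case: (pair n). }
  elim: n => [|n [IH1 IH2]].
  - rewrite !expr0 !expr1 hs. split; by rewrite /lucasF /toF.
  - split; first exact: IH2.
    rewrite lucasF_rec IH1 IH2 (step x hx) (step y hy). ring.
Qed.

Lemma root_neq0 (z : 'F_p) : z ^+ 2 = z + 1 -> z != 0.
Proof.
  move=> hz. apply/eqP => z0. move: hz.
  by rewrite z0 expr0n /= add0r => /eqP; rewrite eq_sym oner_eq0.
Qed.

Section OddPrime.

Hypothesis p_odd : odd p.

(* p./2 = (p - 1)/2 is the exponent of the quadratic character x ^+ p./2. *)
Lemma half_double : (p./2 * 2)%N = p.-1.
Proof. by rewrite muln2 odd_halfK. Qed.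

Lemma half_gt0 : (0 < p./2)%N.
Proof. have := half_double. have := prime_gt1 p_prime. lia. Qed.

Lemma two_neq0 : (2%:R : 'F_p) != 0.
Proof.
  apply: natF_neq0. have := prime_gt1 p_prime.
  have : p != 2%N by apply: contraTneq p_odd => ->. lia.
Qed.

Lemma four_neq0 : (4 : 'F_p) != 0.
Proof. have -> : (4 : 'F_p) = 2%:R * 2%:R by rewrite -natrM. by rewrite mulf_neq0 ?two_neq0. Qed.

Lemma one_neq_m1 : (1 : 'F_p) != -1.
Proof. apply/eqP => e. move/negP: two_neq0. apply. by rewrite -[2%:R]/(1 + 1) {1}e addNr. Qed.

Lemma sq_eq1 (y : 'F_p) : y ^+ 2 = 1 -> y = 1 \/ y = -1.
Proof.
  move=> e. have : (y - 1) * (y + 1) = 0.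
  { have -> : (y - 1) * (y + 1) = y ^+ 2 - 1 by ring. by rewrite e subrr. }
  move/eqP; rewrite mulf_eq0 => /orP [/eqP e1 | /eqP e2]; [left | right].
  - by apply/eqP; rewrite -subr_eq0 e1.
  - by apply/eqP; rewrite -addr_eq0 e2.
Qed.

Lemma chi_pm1 (x : 'F_p) : x != 0 -> x ^+ p./2 = 1 \/ x ^+ p./2 = -1.
Proof. move=> nx. apply: sq_eq1. by rewrite -exprM half_double fermat. Qed.

Lemma chi_sq (s : 'F_p) : s != 0 -> (s ^+ 2) ^+ p./2 = 1.
Proof. move=> ns. by rewrite -exprM mulnC half_double fermat. Qed.

Lemma chi_four : (4 : 'F_p) ^+ p./2 = 1.
Proof. have -> : (4 : 'F_p) = 2%:R ^+ 2 by rewrite expr2 -natrM. exact: chi_sq two_neq0. Qed.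

(* The squares of 1, ..., (p - 1)/2 are pairwise distinct: i² = j² forces
   i = j or p | i + j. *)
Lemma small_squares_uniq : uniq [seq ((i.+1)%:R : 'F_p) ^+ 2 | i <- iota 0 p./2].
Proof.
  have hd := half_double.
  rewrite map_inj_in_uniq ?iota_uniq // => i j.
  rewrite !mem_iota !add0n => /andP [_ hi] /andP [_ hj] e.
  have : ((i.+1)%:R - (j.+1)%:R) * ((i.+1)%:R + (j.+1)%:R) = 0 :> 'F_p.
  { have -> : ((i.+1)%:R - (j.+1)%:R) * ((i.+1)%:R + (j.+1)%:R)
              = ((i.+1)%:R : 'F_p) ^+ 2 - (j.+1)%:R ^+ 2 by ring.
    by rewrite e subrr. }
  move/eqP; rewrite mulf_eq0 => /orP [/eqP e1 | /eqP e2].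
  - apply/eqP; rewrite -eqSS; apply/eqP. apply: natF_inj; try lia.
    by apply/eqP; rewrite -subr_eq0 e1.
  - exfalso. move: e2. rewrite -natrD => /natF_eq0 hdv.
    have : (p <= i.+1 + j.+1)%N by apply: dvdn_leq. lia.
Qed.

(* Euler's criterion, in the direction we need: if x ^+ ((p-1)/2) = 1 and x were
   not a square, then x and the (p-1)/2 squares 1², 2², ... would be
   (p-1)/2 + 1 distinct roots of X^((p-1)/2) - 1. *)
Lemma euler_criterion (x : 'F_p) : x ^+ p./2 = 1 -> exists y, y ^+ 2 = x.
Proof.
  move=> hx.
  have hp2 := prime_gt1 p_prime. have hd := half_double. have hpos := half_gt0.
  case: (boolP [exists y : 'F_p, y ^+ 2 == x]) => [/existsP [y /eqP e] | nE];
    first by exists y.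
  exfalso.
  pose rs := x :: [seq ((i.+1)%:R : 'F_p) ^+ 2 | i <- iota 0 p./2].
  have H := @max_poly_roots _ ('X^(p./2) - 1%:P) rs.
  rewrite size_XnsubC // /rs /= size_map size_iota ltnn in H.
  suff : false by []. apply: H; first by rewrite -size_poly_eq0 size_XnsubC.
  - rewrite /= rootE !hornerE hx subrr eqxx /=.
    apply/allP => z /mapP [i]. rewrite mem_iota add0n => /andP [_ hi] ->.
    rewrite rootE !hornerE -exprM mul2n -muln2 hd fermat ?subrr //.
    apply: natF_neq0. lia.
  - rewrite /= small_squares_uniq andbT.
    apply/mapP => [[i _ e]]. move/existsP: nE. apply. by exists (i.+1%:R); rewrite -e.
Qed.

Lemma half_odd : (-1 : 'F_p) ^+ p./2 = -1 -> odd p./2.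
Proof.
  move=> hm1. apply/negPn/negP => he. move: hm1. rewrite -signr_odd (negbTE he) expr0 => e.
  by move/negP: one_neq_m1; apply; apply/eqP.
Qed.

(* The hypotheses of sum_shifted_pow for d = 2 and, when (p - 1)/2 is odd, d = 4. *)
Lemma dvd_double_iff i : (0 < i <= p./2)%N -> (p.-1 %| 2 * i)%N = (i == p./2).
Proof.
  move=> /andP [h0 h1]. rewrite -half_double mulnC dvdn_pmul2l //.
  apply/idP/eqP => [hd | ->]; last exact: dvdnn.
  have := dvdn_leq h0 hd. lia.
Qed.

Lemma dvd_quadruple_iff i : odd p./2 -> (0 < i <= p./2)%N -> (p.-1 %| 4 * i)%N = (i == p./2).
Proof.
  move=> ho /andP [h0 h1]. rewrite -half_double mulnC -[4%N]/(2 * 2)%N -mulnA dvdn_pmul2l //.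
  rewrite Gauss_dvdr ?coprimen2 //.
  apply/idP/eqP => [hd | ->]; last exact: dvdnn.
  have := dvdn_leq h0 hd. lia.
Qed.

(* Expanding the product gives p terms 1 and three sums of the form
   sum_shifted_pow (with r ^+ 2, r ^+ 2 and r ^+ 4), each equal to -1. *)
Lemma chi_pair_sum : (-1 : 'F_p) ^+ p./2 = -1 ->
  \sum_(r : 'F_p) (1 + (r ^+ 2 - 4) ^+ p./2) * (1 + (r ^+ 2 + 4) ^+ p./2) = -3.
Proof.
  move=> hm1. have ho := half_odd hm1. have hpos := half_gt0.
  under eq_bigr => r _.
  { rewrite mulrDr !mulrDl !mul1r !mulr1 -exprMn.
    have -> : (r ^+ 2 - 4) * (r ^+ 2 + 4) = -16 + r ^+ 4 by ring.
    rewrite (addrC (r ^+ 2) (-4)) (addrC (r ^+ 2) 4). over. }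
  rewrite !big_split /= sumr_const card_Fp // pchar_Fp_0 //.
  rewrite !sum_shifted_pow //; try (move=> i hi; rewrite ?dvd_double_iff ?dvd_quadruple_iff //).
  ring.
Qed.

Lemma sq_add4_neq0 (r : 'F_p) : (-1 : 'F_p) ^+ p./2 = -1 -> r ^+ 2 + 4 != 0.
Proof.
  move=> hm1. apply/eqP => e.
  have e' : r ^+ 2 = -1 * 4 by rewrite mulN1r; apply/eqP; rewrite -addr_eq0 e.
  have nr : r != 0.
  { by apply: contra_eq_neq e' => ->; rewrite expr0n /= mulN1r eq_sym oppr_eq0 four_neq0. }
  have := chi_sq nr. rewrite e' exprMn hm1 chi_four mulr1 => e2.
  by move/negP: one_neq_m1; apply; apply/eqP.
Qed.

(* Away from r = ±2 both characters are ±1, so the summand of chi_pair_sum is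
   0 unless both are 1. *)
Lemma chi_pair_vanish (r : 'F_p) : (-1 : 'F_p) ^+ p./2 = -1 ->
  r != 2%:R -> r != - 2%:R ->
  ~ ((r ^+ 2 - 4) ^+ p./2 = 1 /\ (r ^+ 2 + 4) ^+ p./2 = 1) ->
  (1 + (r ^+ 2 - 4) ^+ p./2) * (1 + (r ^+ 2 + 4) ^+ p./2) = 0.
Proof.
  move=> hm1 r2 rm2 nboth.
  have na : r ^+ 2 - 4 != 0.
  { have -> : r ^+ 2 - 4 = (r - 2%:R) * (r + 2%:R) :> 'F_p by ring.
    by rewrite mulf_neq0 // ?subr_eq0 // addr_eq0. }
  case: (chi_pm1 na) => ea; last by rewrite ea addrN mul0r.
  case: (chi_pm1 (sq_add4_neq0 r hm1)) => eb; last by rewrite eb addrN mulr0.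
  by case: nboth.
Qed.

(* Otherwise the character sum would only see r = ±2, where it equals
   2 (1 + 8^((p-1)/2)) = 4 or 0, forcing p = 7 or p = 3. *)
Lemma exists_double_residue : p != 3%N -> p != 7%N -> (-1 : 'F_p) ^+ p./2 = -1 ->
  exists r : 'F_p, (r ^+ 2 - 4) ^+ p./2 = 1 /\ (r ^+ 2 + 4) ^+ p./2 = 1.
Proof.
  move=> p3 p7 hm1.
  case: (boolP [exists r : 'F_p, ((r ^+ 2 - 4) ^+ p./2 == 1) && ((r ^+ 2 + 4) ^+ p./2 == 1)])
    => [/existsP [r /andP [/eqP h1 /eqP h2]] | nE]; first by exists r.
  exfalso.
  have n8 : (8 : 'F_p) != 0.
  { have -> : (8 : 'F_p) = 2%:R * 4 by rewrite -natrM. by rewrite mulf_neq0 ?two_neq0 ?four_neq0. }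
  have nm2 : (- 2%:R : 'F_p) != 2%:R.
  { apply/eqP => e. move/eqP: four_neq0; apply.
    have -> : (4 : 'F_p) = 2%:R - (- 2%:R) by ring. by rewrite e subrr. }
  have at_two (r : 'F_p) : r ^+ 2 = 4 ->
    (1 + (r ^+ 2 - 4) ^+ p./2) * (1 + (r ^+ 2 + 4) ^+ p./2) = 1 + 8 ^+ p./2.
  { move=> e. rewrite e subrr expr0n /= gtn_eqF ?half_gt0 // addr0 mul1r.
    by rewrite -natrD. }
  have := chi_pair_sum hm1.
  rewrite (bigD1 2%:R) // (bigD1 (- 2%:R)) //= big1; last first.
  { move=> r /andP [r2 rm2]. apply: chi_pair_vanish => // -[h1 h2].
    move/negP: nE; apply. apply/existsP. exists r. by rewrite h1 h2 eqxx. }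
  rewrite !at_two; try by rewrite ?sqrrN; ring.
  rewrite addr0.
  case: (chi_pm1 n8) => -> e.
  - have : (7%:R : 'F_p) = 0.
    { have -> : (7%:R : 'F_p) = 1 + 1 + (1 + 1) - (-3) by ring. by rewrite e subrr. }
    by move/(@natF_eq0_prime 7 isT) => e7; move/eqP: p7.
  - have : (3%:R : 'F_p) = 0.
    { have -> : (3%:R : 'F_p) = 1 + -1 + (1 + -1) - (-3) by ring. by rewrite e subrr. }
    by move/(@natF_eq0_prime 3 isT) => e3; move/eqP: p3.
Qed.

(** When 5 is not a square, L misses every r such that r² - 4 and r² + 4 are
    both nonzero squares: L_n = r would make 5 (r² ∓ 4) a square. *)

Lemma no_square_five_times (t s : 'F_p) :
  (5 : 'F_p) ^+ p./2 = -1 -> t ^+ p./2 = 1 -> s ^+ 2 <> 5 * t.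
Proof.
  move=> h5 ht e.
  have : (s ^+ 2) ^+ p./2 = -1 by rewrite e exprMn h5 ht mulr1.
  case: (eqVneq s 0) => [-> | ns].
  - rewrite expr0n /= expr0n gtn_eqF ?half_gt0 // => /eqP. by rewrite eq_sym oppr_eq0 oner_eq0.
  - rewrite chi_sq // => e1. by move/negP: one_neq_m1; apply; apply/eqP.
Qed.

Lemma lucasF_misses (r : 'F_p) :
  (5 : 'F_p) ^+ p./2 = -1 -> (r ^+ 2 - 4) ^+ p./2 = 1 -> (r ^+ 2 + 4) ^+ p./2 = 1 ->
  forall n, lucasF n <> r.
Proof.
  move=> h5 hm hp n hn. have := lucasF_disc n. rewrite hn -signr_odd.
  case: (odd n) => /= e.
  - rewrite expr1 mulrN1 opprK in e. exact: no_square_five_times h5 hp e.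
  - rewrite expr0 mulr1 in e. exact: no_square_five_times h5 hm e.
Qed.

(** When 5 = s0² is a square, L_n = α^n + β^n with α, β = (1 ± s0)/2 nonzero, so
    L_n only depends on n mod (p - 1) and takes at most p - 1 values. *)

Lemma golden_root (s0 q : 'F_p) :
  s0 ^+ 2 = 5 -> 2%:R * q = 1 -> ((1 + s0) * q) ^+ 2 = (1 + s0) * q + 1.
Proof.
  move=> es hq. apply/eqP; rewrite -subr_eq0; apply/eqP.
  have -> : ((1 + s0) * q) ^+ 2 - ((1 + s0) * q + 1)
            = q ^+ 2 * (s0 ^+ 2 - 5) + (2%:R * q - 1) * (3%:R * q + s0 * q + 1) by ring.
  by rewrite es hq !subrr mulr0 mul0r addr0.
Qed.

Lemma lucasF_binet : (5 : 'F_p) ^+ p./2 = 1 ->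
  exists x y : 'F_p, [/\ x != 0, y != 0 & forall n, lucasF n = x ^+ n + y ^+ n].
Proof.
  move=> h5. case: (euler_criterion h5) => s0 es.
  have hq : 2%:R * (2%:R : 'F_p)^-1 = 1 by rewrite mulfV ?two_neq0.
  have hx := golden_root es hq.
  have hy : ((1 + - s0) * 2%:R^-1) ^+ 2 = (1 + - s0) * 2%:R^-1 + 1.
  { by apply: golden_root hq; rewrite sqrrN. }
  exists ((1 + s0) * 2%:R^-1), ((1 + - s0) * 2%:R^-1).
  split; [exact: root_neq0 hx | exact: root_neq0 hy |].
  apply: lucasF_binet_roots hx hy.
  rewrite -mulrDl. have -> : 1 + s0 + (1 + - s0) = 2%:R :> 'F_p by ring. exact: hq.
Qed.

Lemma lucasF_few_values : (5 : 'F_p) ^+ p./2 = 1 -> ~ (forall r : 'F_p, exists n, lucasF n = r).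
Proof.
  move=> h5 hsurj. case: (lucasF_binet h5) => x [y [nx ny hxy]].
  have hp1 : (0 < p.-1)%N by have := prime_gt1 p_prime; lia.
  have cover : [set: 'F_p] \subset [set lucasF (nat_of_ord i) | i : 'I_p.-1].
  { apply/subsetP => r _. case: (hsurj r) => n hn. apply/imsetP.
    exists (Ordinal (ltn_pmod n hp1)) => //.
    by rewrite -hn !hxy /= (pow_mod_pred n nx) (pow_mod_pred n ny). }
  have := leq_trans (subset_leq_card cover) (leq_imset_card _ _).
  rewrite cardsT card_Fp // card_ord. have := prime_gt1 p_prime. lia.
Qed.

Theorem lucasF_not_surjective : p != 3%N -> p != 5%N -> p != 7%N ->
  ~ (forall r : 'F_p, exists n, lucasF n = r).
Proof.
  move=> p3 p5 p7 hsurj.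
  have n5 : (5 : 'F_p) != 0.
  { apply/eqP => e. move/eqP: p5. apply. exact: (@natF_eq0_prime 5 isT). }
  have nm1 : (-1 : 'F_p) != 0 by rewrite oppr_eq0 oner_eq0.
  case: (chi_pm1 n5) => h5; first exact: lucasF_few_values h5 hsurj.
  have [r [hm hp]] : exists r : 'F_p, (r ^+ 2 - 4) ^+ p./2 = 1 /\ (r ^+ 2 + 4) ^+ p./2 = 1.
  { case: (chi_pm1 nm1) => hm1; last exact: exists_double_residue.
    exists 0. rewrite expr0n /= sub0r add0r chi_four.
    have -> : (- 4 : 'F_p) = -1 * 4 by rewrite mulN1r.
    by rewrite exprMn hm1 chi_four mulr1. }
  case: (hsurj r) => n. exact: lucasF_misses h5 hm hp n.
Qed.

End OddPrime.

End PrimeField.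

Lemma prime_Z_to_nat (p : Z) : Znumtheory.prime p -> prime (Z.to_nat p).
Proof.
  move=> hp. have hp2 := Znumtheory.prime_ge_2 p hp.
  apply/primeP; split; first by lia.
  move=> d /dvdnP [k hk] /=. apply/orP.
  have hdvd : Z.divide (Z.of_nat d) p.
  { exists (Z.of_nat k). rewrite -(Z2Nat.id p); last by lia. rewrite hk. lia. }
  case: (Znumtheory.prime_divisors p hp _ hdvd) => [h | [h | [h | h]]]; lia.
Qed.

Theorem lucas_incomplete_prime (p : Z) :
  Znumtheory.prime p -> p <> 2 -> p <> 3 -> p <> 5 -> p <> 7 -> ~ complete_mod L p.
Proof.
  move=> hp p2 p3 p5 p7 hL.
  have hp2 := Znumtheory.prime_ge_2 p hp.
  have hq := prime_Z_to_nat hp.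
  have q_odd : odd (Z.to_nat p).
  { case: (even_prime hq) => // e. exfalso. apply: p2. lia. }
  apply: (lucasF_not_surjective hq q_odd); try (apply/eqP; lia).
  move=> r. case: (hL (Z.of_nat r)) => n [_ hn]. exists n.
  rewrite /lucasF (@toF_cong _ hq (L n) (Z.of_nat r)) ?toF_nat ?natr_Zp //.
  rewrite Z2Nat.id; last by lia. apply/zcong_iff_mod => //. lia.
Qed.

End LucasModPrime.

Theorem mainTheorem10 (m : Z) (hm : 2 <= m) :
  complete_mod L m ->
  forall a b : Z, Z.gcd a b = 1 -> complete_mod (G a b) m.
Proof.
  intros HL a b Hab.
  destruct (lucas_complete_moduli LucasModPrime.lucas_incomplete_prime m hm HL)
    as [| | | | | K]; try (apply gib_complete_certified; [simpl; tauto | exact Hab]).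
  now apply gib_complete_pow3.
Qed.
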